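(* Let $\mu\in(\mathbb Z^n_{\ge0})_+$, let $\ell\in[n]$ with $\ell\ge\ell(\mu)$, and let $F\in B(\varpi_\ell)$ be such that $F\otimes T^0_\mu$ is semistandard. Then $$\Psi_{F\otimes T^0_\mu}=t^{\ell(u_F)}(T_{u_F^{-1}})^{-1}\mathbf 1_{\varpi_\ell+\mu}.$$ In particular $\Psi_{T^0_\lambda}=\mathbf 1_\lambda$ for every $\lambda\in(\mathbb Z^n_{\ge0})_+$.
   Context: Fix $n\ge1$, $[n]=\{1,\dots,n\}$. $S_n$ with simple transpositions $s_i$ and length $\ell(\cdot)$ acts on $\mathbb Z^n$ by permuting coordinates; $\varpi_k=\varepsilon_1+\dots+\varepsilon_k$. $(\mathbb Z^n_{\ge0})_+=\{\lambda\in\mathbb Z^n_{\ge0}:\lambda_1\ge\dots\ge\lambda_n\}$, $\ell(\mu)$ = number of nonzero parts. $S_{n,\lambda}$ is the stabilizer of $\lambda$. The affine Hecke algebra $H$ is the $\mathbb Z[t^{\pm1}]$-algebra with generators $T_1,\dots,T_{n-1},X_1^{\pm1},\dots,X_n^{\pm1}$ and relations $T_i^2=(t-1)T_i+t$, $T_iT_{i+1}T_i=T_{i+1}T_iT_{i+1}$, $T_iT_j=T_jT_i$ ($|i-j|>1$), $X_iX_j=X_jX_i$, $T_iX_iT_i=tX_{i+1}$, $T_iX_j=X_jT_i$ ($j\notin\{i,i+1\}$). $T_w=T_{i_1}\cdots T_{i_m}$ for a reduced word of $w$. $H_n=\mathrm{span}\{T_w:w\in S_n\}$, $H_{n,\lambda}=\mathrm{span}\{T_w:w\in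 S_{n,\lambda}\}$, $\mathbf 1_\lambda=\sum_{w\in S_{n,\lambda}}T_w$. Columns: $B(\varpi_\ell)$ is the set of $C=(c_1<\dots<c_\ell)\subseteq[n]$; $u_C\in S_n$ sends $k\mapsto c_k$ ($k\le\ell$) and sends $\ell+1,\dots,n$ increasingly onto $[n]\setminus C$. Tensors $T=C_r\otimes\cdots\otimes C_1$ ($C_i\in B(\varpi_{\ell_i})$, $\ell_1\le\dots\le\ell_r$) are fillings of the Young diagram of $\sum\varpi_{\ell_i}$ with columns $C_r,\dots,C_1$ left to right; semistandard means rows weakly increase left to right. For $\mu\in(\mathbb Z^n_{\ge0})_+$, $T^0_\mu$ is the tableau of shape $\mu$ whose row $i$ is filled with $i$ (all columns equal to $(1,\dots,m)$); $T^0_0$ is empty and $F\otimes T^0_0=F$. $\Psi$: each $h\in H_n$ is uniquely $\sum_{F\in B(\varpi_\ell)}T_{u_F}h_F$ with $h_F\in H_{n,\varpi_\ell}$. For a column $C\in B(\varpi_\ell)$, $\Psi_C=t^{\ell(u_C)}(T_{u_C^{-1}})^{-1}\mathbf 1_{\varpi_\ell}$; for $T=C\otimes S$ ($C\in B(\varpi_\ell)$, $S$ with columns of length $\le\ell$), write $\Psi_S=\sum_{E\in B(\varpi_\ell)}T_{u_E}h_{E,S}$ ($h_{E,S}\in H_{n,\varpi_\ell}$) and set $\Psi_T=t^{\ell(u_C)}(T_{u_C^{-1}})^{-1}h_{C,S}$. *)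

From HB Require Import structures.
From mathcomp Require Import all_boot all_order all_algebra all_fingroup.
From mathcomp Require classical_sets.
Set Implicit Arguments. Unset Strict Implicit. Unset Printing Implicit Defensive.
Import GRing.Theory.
Local Open Scope ring_scope.

(* Conventions: [n] = {1..n} is modelled by 'I_n = {0..n-1};
   permutations are {perm 'I_n}; composition (f o g) is [pcomp f g] = g * f
   (mathcomp's product is left-to-right). *)

Section Hecke.
Variables (R : comUnitRingType) (t : R) (n : nat).

Definition pcomp (f g : 'S_n) : 'S_n := (g * f)%g.

Definition plen (w : 'S_n) : nat :=
  #|[set p : 'I_n * 'I_n | (p.1 < p.2)%N && (w p.2 < w p.1)%N]|.

(* simple transposition s_i = (i, i+1) (used only for i.+1 < n) *)
Definition sgen (i : 'I_n) : 'S_n := tperm i (insubd i i.+1).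

(* elements of H_n: coefficient vectors on the basis (T_w)_{w in S_n} *)
Local Notation hecke := {ffun 'S_n -> R}.

Definition hscale (k : R) (h : hecke) : hecke := [ffun v => k * h v].

Definition Tb (w : 'S_n) : hecke := [ffun v => (v == w)%:R].

(* left multiplication by T_i:
   T_i T_w = T_{s_i w} if l(s_i w) > l(w), (t-1) T_w + t T_{s_i w} otherwise *)
Definition Tleft (i : 'I_n) (h : hecke) : hecke :=
  [ffun v => if (plen (pcomp (sgen i) v) < plen v)%N
             then h (pcomp (sgen i) v) + (t - 1) * h v
             else t * h (pcomp (sgen i) v)].

Fixpoint redword_aux (k : nat) (w : 'S_n) : seq 'I_n :=
  if k is k'.+1 then
    if [pick i : 'I_n | (i.+1 < n)%N && (plen (pcomp (sgen i) w) < plen w)%N]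
      is Some i then i :: redword_aux k' (pcomp (sgen i) w) else [::]
  else [::].
Definition redword (w : 'S_n) : seq 'I_n := redword_aux (plen w) w.

(* T_w * h  with T_w = T_{i_1} ... T_{i_m} for the reduced word i_1 ... i_m *)
Definition Tw_mul (w : 'S_n) (h : hecke) : hecke := foldr Tleft h (redword w).

Definition hmul (h g : hecke) : hecke := \sum_(w : 'S_n) hscale (h w) (Tw_mul w g).

Definition hone : hecke := Tb 1%g.

Definition hinv (h : hecke) : hecke :=
  classical_sets.xget 0 (fun g => hmul h g = hone /\ hmul g h = hone).

Definition is_partition (la : 'I_n -> nat) : Prop :=
  forall i j : 'I_n, (i <= j)%N -> (la j <= la i)%N.
Definition plength (mu : 'I_n -> nat) : nat := #|[set i | mu i != 0%N]|.
Definition varpi (l : nat) : 'I_n -> nat := fun j => (j < l)%N.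
Definition wadd (a b : 'I_n -> nat) : 'I_n -> nat := fun j => (a j + b j)%N.

Definition stab (la : 'I_n -> nat) : {set 'S_n} :=
  [set w : 'S_n | [forall j, la (w j) == la j]].

(* 1_la = sum_{w in S_{n,la}} T_w *)
Definition one_ (la : 'I_n -> nat) : hecke := [ffun w => (w \in stab la)%:R].

(* H_{n,la} = span{T_w : w in S_{n,la}} *)
Definition in_Hla (la : 'I_n -> nat) (h : hecke) : Prop :=
  forall w, w \notin stab la -> h w = 0.

(* columns C in B(varpi_l): subsets of 'I_n of cardinality l;
   u_C : k |-> c_k (k < l), and l,...,n-1 increasingly onto the complement *)
Definition ucol_fun (C : {set 'I_n}) (k : 'I_n) : 'I_n :=
  nth k (enum C ++ enum (~: C)) k.
Definition ucol (C : {set 'I_n}) : 'S_n :=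
  odflt 1%g [pick w : 'S_n | [forall k, w k == ucol_fun C k]].

Definition tpow (k : nat) : R := t ^+ k.

Definition is_decomp (l : nat) (h : hecke) (f : {ffun {set 'I_n} -> hecke}) : Prop :=
  h = \sum_(F : {set 'I_n} | #|F| == l) hmul (Tb (ucol F)) (f F)
  /\ (forall F : {set 'I_n}, #|F| = l -> in_Hla (varpi l) (f F))
  /\ (forall F : {set 'I_n}, #|F| <> l -> f F = 0).
Definition decomp (l : nat) (h : hecke) : {ffun {set 'I_n} -> hecke} :=
  classical_sets.xget 0 (is_decomp l h).

Definition Tpref (C : {set 'I_n}) : hecke :=
  hscale (tpow (plen (ucol C))) (hinv (Tb ((ucol C)^-1)%g)).

(* tensors C_r (x) ... (x) C_1 as the list [:: C_r; ...; C_1] of columns,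
   left to right.  Psi of the empty tensor is set to 1_0 (convention). *)
Fixpoint Psi (T : seq {set 'I_n}) : hecke :=
  match T with
  | [::] => one_ (fun _ => 0%N)
  | [:: C] => hmul (Tpref C) (one_ (varpi #|C|))
  | C :: Sr => hmul (Tpref C) (decomp #|C| (Psi Sr) C)
  end.

(* semistandard: column lengths weakly decrease left to right, and rows weakly
   increase: k-th smallest entry of a column <= k-th smallest entry of the
   next column to its right *)
Definition colseq (C : {set 'I_n}) : seq nat := map val (enum C).
Definition col_rel (A B : {set 'I_n}) : bool :=
  (#|B| <= #|A|)%N &&
  all (fun k => nth 0%N (colseq A) k <= nth 0%N (colseq B) k)%N (iota 0 #|B|).
Definition semistandard (T : seq {set 'I_n}) : bool := sorted col_rel T.

(* T^0_mu: column j (j = 1..mu_1) is {1, ..., mu'_j} *)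
Definition colset (m : nat) : {set 'I_n} := [set i : 'I_n | (i < m)%N].
Definition conjp (mu : 'I_n -> nat) (j : nat) : nat := #|[set i : 'I_n | (j <= mu i)%N]|.
Definition T0 (mu : 'I_n -> nat) : seq {set 'I_n} :=
  [seq colset (conjp mu j) | j <- iota 1 (\max_(i : 'I_n) mu i)].

End Hecke.

(* Every w in S_n factors uniquely as w = u_G v with #|G| = l and v in S_{n,varpi_l},
   and then l(w) = l(u_G) + l(v), so that T_{u_G} T_v = T_w.  Hence the components of
   h in H_n = (+)_G T_{u_G} H_{n,varpi_l} are h_G (v) = h (u_G v) for v in S_{n,varpi_l}.
   If l(mu) <= l and u_F fixes 0, ..., l(mu) - 1, which is what semistandardness of
   F (x) T^0_mu forces, then u_F lies in S_{n,mu}, and S_{n,varpi_l + mu} is the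
   intersection of S_{n,varpi_l} and S_{n,mu}; so the F-component of 1_mu is
   1_{varpi_l + mu}.  Both claims follow by peeling off the first column of T^0_mu,
   which is {0, ..., l(mu) - 1}, with u = 1 and trivial prefactor. *)

From Pilot Require Import Defs.
From HB Require Import structures.
From mathcomp Require Import all_boot all_order all_algebra all_fingroup.
From mathcomp Require Import zify.
From mathcomp Require classical_sets.
Set Implicit Arguments. Unset Strict Implicit. Unset Printing Implicit Defensive.
Import GRing.Theory.

(* Plain [pcomp] would be ssrfun's partial composition. *)
Local Notation pcomp := Defs.pcomp.

Section PermLength.
Variable n : nat.
Implicit Types (u v w : 'S_n) (a b : 'I_n).

Lemma pcompE u v a : pcomp u v a = u (v a).
Proof. by rewrite /Defs.pcomp permM. Qed.

Lemma pcompA u v w : pcomp u (pcomp v w) = pcomp (pcomp u v) w.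
Proof. by rewrite /Defs.pcomp mulgA. Qed.

Lemma pcompg1 w : pcomp w 1%g = w.
Proof. by rewrite /Defs.pcomp mul1g. Qed.

Lemma pcomp1g w : pcomp 1%g w = w.
Proof. by rewrite /Defs.pcomp mulg1. Qed.

Lemma pcompI u : injective (pcomp u).
Proof. by move=> v w; rewrite /Defs.pcomp => /mulIg. Qed.

Definition inversions w : {set 'I_n * 'I_n} :=
  [set p : 'I_n * 'I_n | (p.1 < p.2) && (w p.2 < w p.1)].

Lemma in_inversions w p : (p \in inversions w) = (p.1 < p.2) && (w p.2 < w p.1).
Proof. by rewrite inE. Qed.

Lemma plenE w : plen w = #|inversions w|.
Proof. by []. Qed.

Lemma perm_incr_id w : {homo w : a b / a < b} -> w = 1%g.
Proof.
move=> w_incr; apply/permP => a; rewrite perm1; apply: val_inj.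
pose f k := val (w (insubd a k)).
have sorted_f : sorted ltn (map f (iota 0 n)).
  apply: (homo_sorted_in (P := [pred k | k < n])); last exact: iota_ltn_sorted.
    by move=> k m; rewrite !inE => kn mn km; apply: w_incr; rewrite !val_insubd kn mn.
  by apply/allP => k; rewrite mem_iota.
have f_iota : map f (iota 0 n) = iota 0 n.
  apply: (irr_sorted_eq ltn_trans ltnn sorted_f (iota_ltn_sorted 0 n)) => k.
  rewrite mem_iota leq0n add0n; apply/mapP/idP => [[m _ ->]|kn]; first exact: ltn_ord.
  exists (val (w^-1%g (Ordinal kn))); first by rewrite mem_iota /=.
  by rewrite /f valKd permKV.
have := congr1 (nth 0 ^~ a) f_iota.
by rewrite (nth_map 0) ?size_iota // !nth_iota // /f valKd.
Qed.

Lemma plen1 : plen (1 : 'S_n) = 0.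
Proof.
apply/eqP; rewrite cards_eq0; apply/eqP/setP => p.
rewrite !inE !perm1; apply/negbTE/negP => /andP[]; lia.
Qed.

Definition preim_pair w (p : 'I_n * 'I_n) := (w^-1%g p.1, w^-1%g p.2).

Lemma preim_pair_inj w : injective (preim_pair w).
Proof.
by move=> [a b] [c d] [/(congr1 w) + /(congr1 w)]; rewrite !permKV => -> ->.
Qed.

Lemma inversions_pcomp u v :
  inversions (pcomp u v) \subset inversions v :|: preim_pair v @: inversions u.
Proof.
apply/subsetP => [[a b]]; rewrite in_inversions /= !pcompE => /andP[ab uv_ba].
rewrite inE in_inversions /= ab /=.
case: (ltngtP (v b) (v a)) => //= [vab|/val_inj vab]; last first.
  by move: uv_ba; rewrite vab ltnn.
apply/imsetP; exists (v a, v b); first by rewrite in_inversions /= vab.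
by rewrite /preim_pair /= !permK.
Qed.

Lemma plen_pcomp u v : plen (pcomp u v) <= plen u + plen v.
Proof.
apply: leq_trans (subset_leq_card (inversions_pcomp u v)) _.
rewrite addnC; apply: leq_trans (leq_card_setU _ _) _.
by rewrite leq_add2l leq_imset_card.
Qed.

Lemma val_insubd_succ a : a.+1 < n -> insubd a a.+1 = a.+1 :> nat.
Proof. by move=> h; rewrite val_insubd h. Qed.

Lemma sgenK (i : 'I_n) : cancel (pcomp (sgen i)) (pcomp (sgen i)).
Proof. by move=> w; rewrite /Defs.pcomp /sgen -mulgA tperm2 mulg1. Qed.

Lemma sgen_ltn (i : 'I_n) a b : i.+1 < n ->
  sgen i a < sgen i b -> (a < b) || ((a == i.+1 :> nat) && (b == i :> nat)).
Proof.
move=> hi; rewrite /sgen; move: (val_insubd_succ hi); move: (insubd i i.+1) => j hj.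
have val_neq (c d : 'I_n) : c <> d -> c <> d :> nat by move=> cd /val_inj.
by case: tpermP => [->|->|/val_neq ? /val_neq ?];
   case: tpermP => [->|->|/val_neq ? /val_neq ?]; rewrite ?hj /=; lia.
Qed.

Lemma plen_sgen (i : 'I_n) : i.+1 < n -> plen (sgen i) = 1.
Proof.
move=> hi; have hj := val_insubd_succ hi; rewrite plenE.
suff -> : inversions (sgen i) = [set (i, insubd i i.+1)] by exact: cards1.
apply/setP => [[a b]]; rewrite in_inversions inE /=; apply/idP/idP.
  move=> /andP[ab /(sgen_ltn hi)]; rewrite ltnNge (ltnW ab) /= => /andP[/eqP ea /eqP eb].
  by apply/eqP; congr pair; apply: val_inj; rewrite /= ?hj.
by move=> /eqP [-> ->]; rewrite /sgen tpermL tpermR hj ltnSn /=; lia.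
Qed.

Lemma plen_pcomp_sgen (i : 'I_n) w : i.+1 < n -> plen w <= (plen (pcomp (sgen i) w)).+1.
Proof.
by move=> hi; have := plen_pcomp (sgen i) (pcomp (sgen i) w); rewrite sgenK plen_sgen.
Qed.

Lemma plen_pcomp_sgen_lt (i : 'I_n) w : i.+1 < n ->
  w^-1%g (insubd i i.+1) < w^-1%g i -> plen (pcomp (sgen i) w) < plen w.
Proof.
move=> hi hw; apply: proper_card; apply/properP; split.
  apply/subsetP => [[a b]]; rewrite !in_inversions /= !pcompE => /andP[ab].
  rewrite ab => /(sgen_ltn hi) /orP[//|/andP[/eqP wb /eqP wa]].
  have wa_i : w a = i by apply: val_inj.
  have wb_i1 : w b = insubd i i.+1 by apply: val_inj; rewrite /= wb val_insubd_succ.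
  by move: hw; rewrite -wb_i1 -wa_i !permK; lia.
exists (preim_pair w (insubd i i.+1, i)).
  by rewrite in_inversions /= hw !permKV val_insubd_succ ?ltnSn.
rewrite in_inversions /= !pcompE !permKV /sgen tpermL tpermR negb_and hw.
by rewrite val_insubd_succ //; lia.
Qed.

(* Otherwise w^-1 is increasing on consecutive values, hence increasing, hence 1. *)
Lemma exists_descent w : w != 1%g ->
  exists2 i : 'I_n, i.+1 < n & w^-1%g (insubd i i.+1) < w^-1%g i.
Proof.
move=> w1; case: (pickP (@predT 'I_n)) => [a0 _|no_elt]; last first.
  by case/eqP: w1; apply/permP => a; have := no_elt a.
suff /existsP[i /andP[hi desc]] :
    [exists i : 'I_n, (i.+1 < n) && (w^-1%g (insubd i i.+1) < w^-1%g i)].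
  by exists i.
apply: contraT => no_desc; case/negP: w1; apply/eqP.
pose f k := val (w^-1%g (insubd a0 k)).
have f_incr : {in [pred k | k < n] &, {homo f : k m / k < m}}.
  apply: homo_ltn_in; first exact: ltn_trans.
    by move=> i j _; rewrite inE => jn k /andP[_ kj]; rewrite inE; lia.
  move=> k; rewrite !inE => kn k1n; pose i := Ordinal kn.
  have ei : insubd a0 k = i by apply: val_inj; rewrite val_insubd kn.
  have ei1 : insubd a0 k.+1 = insubd i i.+1 by apply: val_inj; rewrite !val_insubd k1n.
  rewrite /f ei ei1 ltn_neqAle; apply/andP; split.
    apply/negP => /eqP/val_inj/perm_inj/(congr1 (@nat_of_ord n)).
    by rewrite val_insubd_succ //; lia.
  rewrite leqNgt; apply/negP => desc; move/negP: no_desc; apply.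
  by apply/existsP; exists i; apply/andP.
rewrite -[w]invgK (perm_incr_id (w := w^-1%g)) ?invg1 // => a b ab.
by have := f_incr a b (ltn_ord a) (ltn_ord b) ab; rewrite /f !valKd.
Qed.

Lemma exists_left_descent w : w != 1%g ->
  exists2 i : 'I_n, i.+1 < n & plen (pcomp (sgen i) w) < plen w.
Proof. by case/exists_descent => i hi desc; exists i => //; exact: plen_pcomp_sgen_lt. Qed.

Lemma plen_eq0 w : plen w = 0 -> w = 1%g.
Proof. by move=> w0; apply/eqP; apply: contraT => /exists_left_descent[i _]; rewrite w0. Qed.

End PermLength.

Section HeckeAction.
Local Open Scope ring_scope.
Variables (R : comUnitRingType) (t : R) (n : nat).
Local Notation hecke := {ffun 'S_n -> R}.
Implicit Types (u v w : 'S_n) (g h : hecke).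

Lemma hscale0 h : hscale 0 h = 0.
Proof. by apply/ffunP => v; rewrite !ffunE mul0r. Qed.

Lemma hscale1 h : hscale 1 h = h.
Proof. by apply/ffunP => v; rewrite !ffunE mul1r. Qed.

Lemma hecke_expand h : h = \sum_v hscale (h v) (Tb R v).
Proof.
apply/ffunP => x; rewrite sum_ffunE (bigD1 x) //= big1 => [|y yx].
  by rewrite !ffunE eqxx mulr1 addr0.
by rewrite !ffunE eq_sym (negbTE yx) mulr0.
Qed.

Lemma Tleft_lin (i : 'I_n) (I : finType) (c : I -> R) (a : I -> hecke) :
  Tleft t i (\sum_j hscale (c j) (a j)) = \sum_j hscale (c j) (Tleft t i (a j)).
Proof.
apply/ffunP => v; rewrite ffunE !sum_ffunE.
under [RHS]eq_bigr do rewrite !ffunE.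
case: ifP => _; rewrite mulr_sumr -?big_split; apply: eq_bigr => j _;
  rewrite !ffunE; first by rewrite mulrDr mulrCA.
by rewrite mulrCA.
Qed.

Lemma Tw_mul_lin w (I : finType) (c : I -> R) (a : I -> hecke) :
  Tw_mul t w (\sum_j hscale (c j) (a j)) = \sum_j hscale (c j) (Tw_mul t w (a j)).
Proof. by rewrite /Tw_mul; elim: (redword w) => //= i s ->; exact: Tleft_lin. Qed.

Lemma Tleft_Tb (i : 'I_n) v : (plen v < plen (pcomp (sgen i) v))%N ->
  Tleft t i (Tb R v) = Tb R (pcomp (sgen i) v).
Proof.
move=> hl; apply/ffunP => x; rewrite !ffunE.
have -> : (pcomp (sgen i) x == v) = (x == pcomp (sgen i) v).
  by apply/eqP/eqP => [<-|->]; rewrite sgenK.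
have sv_neq_v : pcomp (sgen i) v != v by apply: contraTneq hl => ->; rewrite ltnn.
case: (eqVneq x (pcomp (sgen i) v)) => [->|_].
  by rewrite sgenK hl (negbTE sv_neq_v) mulr0 addr0.
case: (eqVneq x v) => [->|_]; last by case: ifP; rewrite ?mulr0 ?addr0.
by rewrite ltnNge (ltnW hl) /= mulr0.
Qed.

Lemma redword_aux_Tb k w v : (plen w <= k)%N -> plen (pcomp w v) = (plen w + plen v)%N ->
  foldr (@Tleft R t n) (Tb R v) (redword_aux k w) = Tb R (pcomp w v).
Proof.
elim: k w => [|k IH] w hk hadd /=.
  by move: hk; rewrite leqn0 => /eqP/plen_eq0 ->; rewrite pcomp1g.
case: pickP => [i /andP[hi hd]|no_desc] /=; last first.
  case: (eqVneq w 1%g) => [->|/exists_left_descent[i hi hd]]; first by rewrite pcomp1g.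
  by have := no_desc i; rewrite hi hd.
set w' := pcomp (sgen i) w in hd *.
have w'v_eq : pcomp (sgen i) (pcomp w v) = pcomp w' v by rewrite pcompA.
have := plen_pcomp w' v; have := plen_pcomp_sgen (pcomp w v) hi.
have := plen_pcomp_sgen w hi; rewrite w'v_eq -/w' => h0 h1 h2.
rewrite IH; try lia.
rewrite -w'v_eq Tleft_Tb sgenK //.
by rewrite w'v_eq; lia.
Qed.

Lemma Tw_mul_Tb w v : plen (pcomp w v) = (plen w + plen v)%N ->
  Tw_mul t w (Tb R v) = Tb R (pcomp w v).
Proof. exact: redword_aux_Tb. Qed.

Lemma hmul_Tbl u h : hmul t (Tb R u) h = Tw_mul t u h.
Proof.
rewrite /hmul (bigD1 u) //= big1 => [|w wu]; first by rewrite ffunE eqxx hscale1 addr0.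
by rewrite ffunE (negbTE wu) hscale0.
Qed.

Lemma hmul1h h : hmul t (hone R n) h = h.
Proof. by rewrite hmul_Tbl /Tw_mul /redword plen1. Qed.

Lemma hmulh1 h : hmul t h (hone R n) = h.
Proof.
rewrite [RHS]hecke_expand; apply: eq_bigr => w _.
by rewrite Tw_mul_Tb pcompg1 // plen1 addn0.
Qed.

Lemma hinv1 : hinv t (hone R n) = hone R n.
Proof.
by apply: classical_sets.xget_unique; [rewrite hmul1h | move=> g [_]; rewrite hmulh1].
Qed.

End HeckeAction.

Section Columns.
Variable n : nat.
Implicit Types (A F : {set 'I_n}) (v w : 'S_n) (a b x : 'I_n) (la : 'I_n -> nat).

Lemma sorted_enum_set A : sorted ltn (map val (enum A)).
Proof.
rewrite sorted_map /enum_mem; apply: sorted_filter => [a b c|]; first exact: ltn_trans.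
by rewrite -enumT -sorted_map val_enum_ord iota_ltn_sorted.
Qed.

Lemma map_val_enum_set A k m : k + m <= n ->
  (forall x, (x \in A) = (k <= x < k + m)) -> map val (enum A) = iota k m.
Proof.
move=> kmn memA; apply: (irr_sorted_eq ltn_trans ltnn (sorted_enum_set A)).
  exact: iota_ltn_sorted.
move=> j; rewrite mem_iota; apply/mapP/idP => [[x]|jA]; first by rewrite mem_enum memA => + ->.
have jn : j < n by lia.
by exists (Ordinal jn); rewrite ?mem_enum ?memA.
Qed.

Lemma map_val_enum_colset m : m <= n -> map val (enum (colset n m)) = iota 0 m.
Proof. by move=> mn; apply: map_val_enum_set => // x; rewrite inE. Qed.

Lemma map_val_enum_colsetC m : m <= n -> map val (enum (~: colset n m)) = iota m (n - m).
Proof.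
by move=> mn; apply: map_val_enum_set => [|x]; [lia | have := ltn_ord x; rewrite !inE; lia].
Qed.

Lemma card_colset m : m <= n -> #|colset n m| = m.
Proof. by move=> mn; rewrite cardE -(size_map val) map_val_enum_colset ?size_iota. Qed.

Definition ucol_seq F := enum F ++ enum (~: F).

Lemma size_ucol_seq F : size (ucol_seq F) = n.
Proof. by rewrite size_cat -!cardE cardsC card_ord. Qed.

Lemma uniq_ucol_seq F : uniq (ucol_seq F).
Proof.
rewrite cat_uniq !enum_uniq /= andbT; apply/hasPn => x.
by rewrite !mem_enum inE => ->.
Qed.

Lemma ucol_fun_inj F : injective (ucol_fun F).
Proof.
move=> a b; rewrite /ucol_fun -/(ucol_seq F) (set_nth_default a b) ?size_ucol_seq //.
by move/eqP; rewrite nth_uniq ?size_ucol_seq ?uniq_ucol_seq // => /eqP/val_inj.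
Qed.

Lemma ucolE F a : ucol F a = nth a (ucol_seq F) a.
Proof.
rewrite /ucol; case: pickP => [w /forallP/(_ a)/eqP //|no_perm].
by have /forallP[] := no_perm (perm (@ucol_fun_inj F)) => b; rewrite permE.
Qed.

Lemma ucol_in F a : (ucol F a \in F) = (a < #|F|).
Proof.
rewrite ucolE nth_cat -cardE; case: ifP => aF; first by rewrite -mem_enum mem_nth -?cardE.
apply/negbTE; rewrite -in_setC -mem_enum mem_nth //.
move/negbT: aF; rewrite -leqNgt -cardE => aF.
by have := cardsC F; rewrite card_ord => cardC; rewrite ltn_subLR // cardC.
Qed.

Lemma ucolV_lt F x : ((ucol F)^-1%g x < #|F|) = (x \in F).
Proof. by rewrite -ucol_in permKV. Qed.

Lemma ucol_mono F a b : a < b -> (b < #|F|) || (#|F| <= a) -> ucol F a < ucol F b.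
Proof.
move=> ab blocks; rewrite !ucolE !nth_cat.
have nth_lt A i j : i < j -> j < size (enum A) -> nth a (enum A) i < nth b (enum A) j.
  move=> ij jA; have iA := ltn_trans ij jA.
  rewrite -(nth_map a 0 val) // -(nth_map b 0 val) //.
  by apply: (sorted_ltn_nth ltn_trans); rewrite ?inE ?size_map // sorted_enum_set.
have cardC := cardsC F; rewrite card_ord in cardC.
have -> : size (enum F) = #|F| by rewrite cardE.
have sizeC : size (enum (~: F)) = #|~: F| by rewrite cardE.
case/orP: blocks => [bF|Fa]; first by rewrite bF (ltn_trans ab bF) nth_lt // -cardE.
have aF : (a < #|F|) = false by rewrite ltnNge Fa.
have bF : (b < #|F|) = false by rewrite ltnNge (leq_trans Fa (ltnW ab)).
by rewrite aF bF nth_lt ?sizeC; have := ltn_ord b; lia.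
Qed.

Lemma ucol_inversion F a b : a < b -> ucol F b < ucol F a -> (a < #|F|) && (#|F| <= b).
Proof.
move=> ab ba; have := ucol_mono (F := F) ab.
case: (ltnP b #|F|) => bF; first by move/(_ isT); lia.
by case: (ltnP a #|F|) => // _ /(_ isT); lia.
Qed.

Lemma ucol_colset m : m <= n -> ucol (colset n m) = 1%g.
Proof.
move=> mn; apply/permP => a; rewrite perm1 ucolE; apply: val_inj => /=.
rewrite -(nth_map a 0 val) ?size_ucol_seq // map_cat.
by rewrite map_val_enum_colset // map_val_enum_colsetC // -iotaD subnKC // nth_iota.
Qed.

Lemma sorted_ltn_nth_ge (s : seq nat) k : sorted ltn s -> k < size s -> k <= nth 0 s k.
Proof.
move=> s_sorted; elim: k => [//|k IH] ks.
have : nth 0 s k < nth 0 s k.+1.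
  by apply: (sorted_ltn_nth ltn_trans); rewrite ?inE // ltnW.
by have := IH (ltnW ks); lia.
Qed.

(* The j-th smallest entry of F is at least j, and [col_rel] bounds it by j. *)
Lemma ucol_fix F m : m <= #|F| -> col_rel F (colset n m) ->
  forall j : 'I_n, j < m -> ucol F j = j :> nat.
Proof.
move=> mF /andP[_ /allP rows] j jm.
have mn : m <= n by rewrite -(card_ord n); exact: leq_trans mF (max_card _).
have := rows j; rewrite card_colset // mem_iota /= jm => /(_ isT).
rewrite /colseq map_val_enum_colset // nth_iota //= => le_j.
have jF : j < size (enum F) by rewrite -cardE; lia.
rewrite ucolE nth_cat jF -(nth_map j 0 val) //.
apply/eqP; rewrite eqn_leq le_j /=.
by apply: sorted_ltn_nth_ge; rewrite ?size_map ?sorted_enum_set.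
Qed.

Lemma stabP la v : reflect (forall j, la (v j) = la j) (v \in stab la).
Proof. by rewrite inE; apply: (iffP forallP) => h j; apply/eqP. Qed.

Lemma stab_group_set la : group_set (stab la).
Proof.
apply/group_setP; split => [|v w /stabP v_la /stabP w_la]; apply/stabP => j.
  by rewrite perm1.
by rewrite permM w_la.
Qed.

Canonical stab_group la := Group (stab_group_set la).

Lemma stab_varpiP v l : reflect (forall j, (v j < l) = (j < l)) (v \in stab (varpi l)).
Proof.
apply: (iffP (stabP _ _)) => h j; last by rewrite /varpi h.
by move: (h j); rewrite /varpi; case: (v j < l); case: (j < l).
Qed.

(* v permutes each of the blocks [0, #|F|) and [#|F|, n), on which u_F is increasing,
   so the inversions of u_F v are those of v and the v-relabelled ones of u_F. *)
Lemma plen_ucol_pcomp F v : v \in stab (varpi #|F|) ->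
  plen (pcomp (ucol F) v) = plen (ucol F) + plen v.
Proof.
move=> /stab_varpiP v_stab; set l := #|F| in v_stab *; set u := ucol F.
have vV_stab j : (v^-1%g j < l) = (j < l) by rewrite -v_stab permKV.
apply/eqP; rewrite eqn_leq plen_pcomp /= !plenE addnC.
have sub_v : inversions v \subset inversions (pcomp u v).
  apply/subsetP => [[a b]]; rewrite !in_inversions /= !pcompE => /andP[ab vba].
  rewrite ab /=; apply: ucol_mono => //; rewrite -/l.
  case: (ltnP b l) => bl; first by rewrite v_stab (ltn_trans ab bl).
  by rewrite [l <= _]leqNgt (v_stab b) -leqNgt bl orbT.
have sub_u : preim_pair v @: inversions u \subset inversions (pcomp u v).
  apply/subsetP => p /imsetP[[a b]]; rewrite in_inversions /= => /andP[ab uba] ->.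
  have /andP[al lb] := ucol_inversion ab uba; rewrite -/l in al lb.
  rewrite in_inversions /= !pcompE !permKV uba andbT.
  have := vV_stab a; have := vV_stab b; rewrite al [b < l]ltnNge lb /=; lia.
have disj : inversions v :&: preim_pair v @: inversions u = set0.
  apply/setP => p; rewrite !inE; apply/negbTE/negP => /andP[/andP[_ vp]].
  case/imsetP => -[a b]; rewrite in_inversions /= => /andP[ab _] pE.
  by move: vp; rewrite pE /= !permKV; lia.
rewrite -(card_imset (inversions u) (@preim_pair_inj _ v)) -cardsUI disj cards0 addn0.
by apply: subset_leq_card; rewrite subUset sub_v sub_u.
Qed.

End Columns.

Section ParabolicDecomposition.
Local Open Scope ring_scope.
Variables (R : comUnitRingType) (t : R) (n : nat).
Local Notation hecke := {ffun 'S_n -> R}.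
Implicit Types (F G : {set 'I_n}) (v w : 'S_n) (g h : hecke).

Lemma ucol_coset_mem G l v x : #|G| = l -> v \in stab (varpi l) ->
  (x \in G) = ((pcomp (ucol G) v)^-1%g x < l)%N.
Proof.
move=> <- v_stab; rewrite /Defs.pcomp invMg permM -ucolV_lt.
by have /stab_varpiP -> : v^-1%g \in stab (varpi #|G|) by rewrite groupV.
Qed.

Lemma ucol_coset_inj F G l v v' : #|F| = l -> #|G| = l ->
  v \in stab (varpi l) -> v' \in stab (varpi l) ->
  pcomp (ucol F) v = pcomp (ucol G) v' -> F = G.
Proof.
move=> Fl Gl v_stab v'_stab eq_cosets; apply/setP => x.
by rewrite (ucol_coset_mem x Fl v_stab) (ucol_coset_mem x Gl v'_stab) eq_cosets.
Qed.

Lemma ucol_coset_exists l w : (l <= n)%N ->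
  exists F, exists2 v, #|F| = l /\ v \in stab (varpi l) & w = pcomp (ucol F) v.
Proof.
move=> ln; pose F := [set x | (w^-1%g x < l)%N].
have Fl : #|F| = l.
  have -> : F = w @: colset n l.
    apply/setP => x; rewrite inE; apply/idP/imsetP => [xl|[y]].
      by exists (w^-1%g x); rewrite ?inE ?permKV.
    by rewrite inE => yl ->; rewrite permK.
  by rewrite card_imset ?card_colset //; exact: perm_inj.
exists F, (pcomp (ucol F)^-1%g w); last by rewrite /Defs.pcomp -mulgA mulVg mulg1.
split => //; apply/stab_varpiP => j.
by rewrite pcompE -{1}Fl ucolV_lt inE permK.
Qed.

Definition parabolic_sum l (f : {ffun {set 'I_n} -> hecke}) : hecke :=
  \sum_(G : {set 'I_n} | #|G| == l) hmul t (Tb R (ucol G)) (f G).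

Lemma hmul_ucol G g : in_Hla (varpi #|G|) g ->
  hmul t (Tb R (ucol G)) g = \sum_v hscale (g v) (Tb R (pcomp (ucol G) v)).
Proof.
move=> gH; rewrite hmul_Tbl {1}(hecke_expand g) Tw_mul_lin; apply: eq_bigr => v _.
case: (boolP (v \in stab (varpi #|G|))) => v_stab; last by rewrite gH // !hscale0.
by rewrite Tw_mul_Tb // plen_ucol_pcomp.
Qed.

Lemma parabolic_sum_ucol l (f : {ffun {set 'I_n} -> hecke}) F v :
  (forall G, #|G| = l -> in_Hla (varpi l) (f G)) ->
  #|F| = l -> v \in stab (varpi l) ->
  parabolic_sum l f (pcomp (ucol F) v) = f F v.
Proof.
move=> fH Fl v_stab; rewrite /parabolic_sum sum_ffunE (bigD1 F) ?Fl //= big1 ?addr0.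
  rewrite hmul_ucol; last by rewrite Fl; exact: fH.
  rewrite sum_ffunE (bigD1 v) //= big1 ?addr0.
    by rewrite !ffunE eqxx mulr1.
  move=> v' v'v; rewrite !ffunE (inj_eq (@pcompI _ _)) eq_sym (negbTE v'v).
  by rewrite mulr0.
move=> G /andP[/eqP Gl GF]; rewrite hmul_ucol; last by rewrite Gl; exact: fH.
rewrite sum_ffunE big1 // => v' _.
rewrite !ffunE; case: (boolP (v' \in stab (varpi l))) => v'_stab; last first.
  by rewrite (fH G Gl v' v'_stab) mul0r.
case: eqP => [eq_cosets|_]; last by rewrite mulr0.
by move: GF; rewrite (ucol_coset_inj Fl Gl v_stab v'_stab eq_cosets) eqxx.
Qed.

Lemma decompE l h F v : (l <= n)%N -> #|F| = l ->
  decomp t l h F v = if v \in stab (varpi l) then h (pcomp (ucol F) v) else 0.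
Proof.
move=> ln Fl.
pose f0 : {ffun {set 'I_n} -> hecke} := [ffun G : {set 'I_n} => if #|G| == l then
   [ffun v => if v \in stab (varpi l) then h (pcomp (ucol G) v) else 0] else 0].
have f0H G : #|G| = l -> in_Hla (varpi l) (f0 G).
  by move=> Gl w w_stab; rewrite !ffunE Gl eqxx ffunE (negbTE w_stab).
have f0_decomp : is_decomp t l h f0.
  split; last split => // [G /eqP Gl]; last by rewrite ffunE (negbTE Gl).
  apply/ffunP => w; have [G [u [Gl u_stab] ->]] := ucol_coset_exists w ln.
  by rewrite -/(parabolic_sum l f0) parabolic_sum_ucol // !ffunE Gl eqxx ffunE u_stab.
have [h_eq [decompH _]] := classical_sets.xgetPex 0 (ex_intro _ f0 f0_decomp).
rewrite -/(decomp t l h) in h_eq decompH.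
case: ifP => v_stab; last by rewrite (decompH F Fl v) ?v_stab.
by rewrite {2}h_eq -/(parabolic_sum l _) parabolic_sum_ucol.
Qed.

End ParabolicDecomposition.

Section PartitionsAndRowTableaux.
Variable n : nat.
Implicit Types (F : {set 'I_n}) (mu la : 'I_n -> nat).

Lemma plength_le mu : plength mu <= n.
Proof. by apply: leq_trans (max_card _) _; rewrite card_ord. Qed.

Lemma partition_support mu : is_partition mu ->
  [set j | mu j != 0] = colset n (plength mu).
Proof.
move=> mu_part; apply/eqP; rewrite eqEcard card_colset ?plength_le // leqnn andbT.
apply/subsetP => j; rewrite !inE => mu_j; rewrite -[j < _]ltnS -(card_colset (ltn_ord j)).
apply: subset_leq_card; apply/subsetP => i; rewrite !inE ltnS => ij.
by rewrite -lt0n (leq_trans _ (mu_part _ _ ij)) // lt0n.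
Qed.

Lemma partition_neq0 mu j : is_partition mu -> (mu j != 0) = (j < plength mu).
Proof. by move=> mu_part; have /setP/(_ j) := partition_support mu_part; rewrite !inE. Qed.

Lemma stab_wadd mu l : is_partition mu -> plength mu <= l ->
  stab (wadd (varpi l) mu) = stab (varpi l) :&: stab mu.
Proof.
move=> mu_part mu_l; apply/setP => v; rewrite in_setI.
have mu0 (j : 'I_n) : ~~ (j < l) -> mu j = 0.
  by move=> jl; apply/eqP; rewrite -[_ == _]negbK partition_neq0 //; lia.
have pos_wadd (j : 'I_n) : (0 < wadd (varpi l) mu j) = (j < l).
  by rewrite /wadd /varpi; case: (boolP (j < l)) => //= jl; rewrite mu0.
apply/idP/andP => [/stabP v_stab|[/stab_varpiP v_l /stabP v_mu]].
  have v_l j : (v j < l) = (j < l) by rewrite -!pos_wadd v_stab.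
  split; first exact/stab_varpiP.
  by apply/stabP => j; have := v_stab j; rewrite /wadd /varpi v_l => /addnI.
by apply/stabP => j; rewrite /wadd /varpi v_l v_mu.
Qed.

Lemma ucol_stab mu F : is_partition mu ->
  (forall j : 'I_n, j < plength mu -> ucol F j = j :> nat) -> ucol F \in stab mu.
Proof.
move=> mu_part u_fix; apply/stabP => j.
have mu0 (k : 'I_n) : plength mu <= k -> mu k = 0.
  by move=> pk; apply/eqP; rewrite -[_ == _]negbK partition_neq0 // -leqNgt.
case: (ltnP j (plength mu)) => jp.
  by rewrite (_ : ucol F j = j) //; apply: val_inj; rewrite /= u_fix.
rewrite (mu0 j) //; case: (ltnP (ucol F j) (plength mu)) => [up|]; last by move/mu0 ->.
have /perm_inj uj_j : ucol F (ucol F j) = ucol F j by apply: val_inj; rewrite /= u_fix.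
by move: up; rewrite uj_j; lia.
Qed.

Definition remove_col1 mu : 'I_n -> nat := fun i => (mu i).-1.

Lemma is_partition_remove_col1 mu : is_partition mu -> is_partition (remove_col1 mu).
Proof. by move=> mu_part i j ij; have := mu_part i j ij; rewrite /remove_col1; lia. Qed.

Lemma plength_remove_col1 mu : plength (remove_col1 mu) <= plength mu.
Proof. by apply: subset_leq_card; apply/subsetP => i; rewrite !inE /remove_col1; lia. Qed.

Lemma wadd_remove_col1 mu : is_partition mu ->
  wadd (varpi (plength mu)) (remove_col1 mu) =1 mu.
Proof.
move=> mu_part j; rewrite /wadd /varpi /remove_col1 -partition_neq0 //.
by case: (mu j).
Qed.

Lemma T0_nil mu : \max_(i : 'I_n) mu i = 0 -> T0 mu = [::].
Proof. by rewrite /T0 => ->. Qed.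

Lemma max_remove_col1 mu M : \max_(i : 'I_n) mu i = M.+1 ->
  \max_(i : 'I_n) remove_col1 mu i = M.
Proof.
by move=> maxM; rewrite -[M]/(M.+1.-1) -maxM; apply/esym/(big_morph predn) => // a b; lia.
Qed.

Lemma T0_cons mu M : \max_(i : 'I_n) mu i = M.+1 ->
  T0 mu = colset n (plength mu) :: T0 (remove_col1 mu).
Proof.
move=> maxM; rewrite /T0 (max_remove_col1 maxM) maxM /=; congr cons.
  by apply: congr1; apply: eq_card => i; rewrite !inE lt0n.
rewrite (iotaDl 1 1) -map_comp; apply/eq_in_map => k; rewrite mem_iota => /andP[k1 _] /=.
by congr colset; apply: eq_card => i; rewrite !inE /remove_col1 add1n; lia.
Qed.

End PartitionsAndRowTableaux.

Section PsiOfRowTableaux.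
Local Open Scope ring_scope.
Variables (R : comUnitRingType) (t : R) (n : nat).
Implicit Types (F : {set 'I_n}) (mu la : 'I_n -> nat).

Lemma one_eq la la' : la =1 la' -> one_ R la = one_ R la'.
Proof.
move=> eq_la; rewrite /one_; suff -> : stab la = stab la' by [].
by apply/setP => w; apply/stabP/stabP => h j; [rewrite -!eq_la h | rewrite !eq_la h].
Qed.

Lemma decomp_one mu l F : is_partition mu -> (plength mu <= l <= n)%N -> #|F| = l ->
  (forall j : 'I_n, j < plength mu -> ucol F j = j :> nat)%N ->
  decomp t l (one_ R mu) F = one_ R (wadd (varpi l) mu).
Proof.
move=> mu_part /andP[mu_l ln] Fl u_fix; apply/ffunP => v.
rewrite decompE // !ffunE stab_wadd // in_setI.
case: (boolP (v \in stab (varpi l))) => //= v_stab.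
by rewrite /Defs.pcomp groupMr // ucol_stab.
Qed.

Lemma Tpref_colset m : (m <= n)%N -> Tpref t (colset n m) = hone R n.
Proof. by move=> mn; rewrite /Tpref ucol_colset // invg1 plen1 /tpow expr0 hinv1 hscale1. Qed.

(* The one-column case of Psi is the general recursion applied to Psi [::] = 1_0. *)
Lemma Psi_cons F (S : seq {set 'I_n}) : (#|F| <= n)%N ->
  Psi t (F :: S) = hmul t (Tpref t F) (decomp t #|F| (Psi t S) F).
Proof.
case: S => [|C S] //= Fn.
have len0 : plength (fun _ : 'I_n => 0%N) = 0%N.
  by apply/eqP; rewrite cards_eq0; apply/eqP/setP => j; rewrite !inE.
rewrite decomp_one ?len0 ?Fn //.
by congr hmul; apply: one_eq => j; rewrite /wadd addn0.
Qed.

Lemma Psi_T0 la : is_partition la -> Psi t (T0 la) = one_ R la.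
Proof.
move: {2}(\max_(i : 'I_n) la i) (erefl (\max_(i : 'I_n) la i)) => M.
elim: M la => [|M IH] la max_la la_part.
  rewrite T0_nil //=; apply: one_eq => j; apply/eqP; rewrite eq_sym -leqn0 -max_la.
  exact: leq_bigmax.
have la_len := plength_le la.
rewrite (T0_cons max_la) Psi_cons card_colset // Tpref_colset // hmul1h.
have rem_part := is_partition_remove_col1 la_part.
rewrite IH ?(max_remove_col1 max_la) // (@decomp_one (remove_col1 la)) ?card_colset //.
- exact/one_eq/wadd_remove_col1.
- by rewrite plength_remove_col1 la_len.
- by move=> j _; rewrite ucol_colset // perm1.
Qed.

Lemma semistandard_ucol_fix mu F : is_partition mu -> (plength mu <= #|F|)%N ->
  semistandard (F :: T0 mu) -> forall j : 'I_n, (j < plength mu)%N -> ucol F j = j :> nat.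
Proof.
move=> mu_part mu_F; case max_mu : (\max_(i : 'I_n) mu i) => [|M].
  move=> _ j; rewrite -partition_neq0 //.
  by have := @leq_bigmax _ mu j; rewrite max_mu leqn0 => ->.
rewrite (T0_cons max_mu) /semistandard /= => /andP[row _].
exact: ucol_fix.
Qed.

End PsiOfRowTableaux.

Local Open Scope ring_scope.

Theorem proposition6p1 (R : comUnitRingType) (t : R) (ht : t \is a GRing.unit)
    (n : nat) (hn : (0 < n)%N) :
  (forall (mu : 'I_n -> nat) (l : nat) (F : {set 'I_n}),
      is_partition mu -> (1 <= l <= n)%N -> (plength mu <= l)%N ->
      #|F| = l -> semistandard (F :: T0 mu) ->
      Psi t (F :: T0 mu)
      = hmul t (hscale (tpow t (plen (ucol F))) (hinv t (Tb R ((ucol F)^-1)%g)))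
               (one_ R (wadd (varpi l) mu)))
  /\ (forall la : 'I_n -> nat, is_partition la -> Psi t (T0 la) = one_ R la).
Proof.
split=> [mu l F mu_part /andP[_ ln] mu_l Fl F_ss|la la_part]; last exact: Psi_T0.
have mu_F : (plength mu <= #|F|)%N by rewrite Fl.
have u_fix := semistandard_ucol_fix mu_part mu_F F_ss.
by rewrite Psi_cons Fl // Psi_T0 // decomp_one ?mu_l.
Qed.
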